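(* Let $G=(V,E)$ be a finite connected simple graph on $N\ge2$ vertices with adjacency matrix $A$, whose largest eigenvalue is $\phi_0$; let $W\subseteq V$ be a nonempty set of marked vertices, and for $\gamma>0$ let $H(\gamma)=-\gamma A-\sum_{w\in W}|w\rangle\langle w|$ on $\mathbb{C}^V$. Fix an index $j\in\{2,\dots,N\}$, and for $\gamma>0$ let $\lambda^-(\gamma)$ be the smallest eigenvalue of $H(\gamma)$ and $\lambda^+(\gamma)$ its $j$-th smallest eigenvalue counted with multiplicity (so $\lambda^+(\gamma)>\lambda^-(\gamma)$). Then there exists $\gamma>0$ such that $$-\gamma\phi_0=\frac{\lambda^-(\gamma)+\lambda^+(\gamma)}{2}.$$
   Context: $\{|v\rangle: v\in V\}$ is the computational basis of $\mathbb{C}^V$. *)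

From HB Require Import structures.
From mathcomp Require Import all_boot all_order all_algebra.
From mathcomp Require Import reals.
Set Implicit Arguments. Unset Strict Implicit. Unset Printing Implicit Defensive.
Import Order.TTheory GRing.Theory Num.Theory.
Local Open Scope ring_scope.

Definition simple_graph N (adj : rel 'I_N) : Prop :=
  symmetric adj /\ irreflexive adj.

Definition connected_graph N (adj : rel 'I_N) : Prop :=
  forall x y : 'I_N, connect adj x y.

Definition adjmx (R : nzRingType) N (adj : rel 'I_N) : 'M[R]_N :=
  \matrix_(i, k) (adj i k)%:R.

Definition Hmx (R : nzRingType) N (adj : rel 'I_N) (W : {set 'I_N}) (g : R)
  : 'M[R]_N :=
  - (g *: adjmx R adj) - \sum_(w in W) delta_mx w w.

(* s is the list of eigenvalues of M, counted with multiplicity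
   (roots of the characteristic polynomial), sorted in nondecreasing order;
   s`_k is then the (k+1)-th smallest eigenvalue *)
Definition sorted_spectrum (R : realType) N (M : 'M[R]_N) (s : seq R) : Prop :=
  sorted <=%R s /\ char_poly M = \prod_(x <- s) ('X - x%:P).

Definition largest_eigenvalue (R : realType) N (M : 'M[R]_N) (phi : R) : Prop :=
  eigenvalue M phi /\ (forall mu : R, eigenvalue M mu -> mu <= phi).

From HB Require Import structures.
From mathcomp Require Import all_boot all_order all_algebra.
From mathcomp Require Import reals.
From mathcomp Require Import sesquilinear spectral complex.
From mathcomp Require Import ring lra zify.
From mathcomp Require classical_sets topology normedtype.
Import Order.TTheory GRing.Theory Num.Theory.
Set Implicit Arguments. Unset Strict Implicit. Unset Printing Implicit Defensive.
Local Open Scope ring_scope.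
Local Open Scope sesquilinear_scope.

(* Let lam_k(g) be the k-th smallest eigenvalue of H(g) and
   f(g) = (lam_0(g) + lam_{j-1}(g)) / 2 + g phi0.  By Weyl's inequality, obtained
   from the Courant-Fischer dimension count, each lam_k is Lipschitz in g, so f is
   continuous.  For small g a marked vertex w gives lam_0 <= <w|H|w> = -1 while
   lam_{j-1} = O(g), so f(g) < 0.  Since H(g) >= -gA - 1, we get lam_0 >= -g phi0 - 1
   and lam_1 >= -g phi1 - 1, where phi1 < phi0 is the next eigenvalue of A: by
   Perron-Frobenius the top eigenvalue of a connected graph is simple.  Hence
   f(g) >= g (phi0 - phi1) / 2 - 1 > 0 for large g, and the intermediate value
   theorem gives the root.  Real symmetric matrices are diagonalised over R[i]
   by the complex spectral theorem. *)

Section ComplexQuadraticForms.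
Variable R : rcfType.
Local Notation C := R[i].
Local Notation "x %:C" := (real_complex R x).
Local Notation Re := (@complex.Re R).

Definition cnorm2 (z : C) : R := Re (z * z^*).

Lemma cnorm2E (a b : R) : cnorm2 (Complex a b) = a ^+ 2 + b ^+ 2.
Proof. by rewrite /cnorm2 /=; ring. Qed.

Lemma cnorm2_ge0 z : 0 <= cnorm2 z.
Proof. by case: z => a b; rewrite cnorm2E addr_ge0 ?sqr_ge0. Qed.

Lemma cnorm2_eq0 z : (cnorm2 z == 0) = (z == 0).
Proof.
by case: z => a b; rewrite cnorm2E paddr_eq0 ?sqr_ge0 // !sqrf_eq0 eq_complex.
Qed.

Lemma cnorm2_0 : cnorm2 0 = 0.
Proof. by rewrite /cnorm2 mul0r. Qed.

Lemma cnorm2_bool (b : bool) : cnorm2 b%:R = b%:R.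
Proof. by case: b; rewrite /cnorm2 /=; ring. Qed.

Lemma cnorm2_norm z : cnorm2 `|z| = cnorm2 z.
Proof. by rewrite /cnorm2 -!normCK normr_id. Qed.

Definition vnorm2 n (x : 'rV[C]_n) : R := \sum_i cnorm2 (x 0 i).

Definition qform n (A : 'M[C]_n) (x : 'rV[C]_n) : R := Re ((x *m A *m x ^t*) 0 0).

Lemma vnorm2_norm n (v : 'rV[C]_n) : vnorm2 (map_mx Num.norm v) = vnorm2 v.
Proof. by apply: eq_bigr => k _; rewrite mxE cnorm2_norm. Qed.

Lemma sum_cnorm2_le_vnorm2 n (S : pred 'I_n) (x : 'rV[C]_n) :
  \sum_(i | S i) cnorm2 (x 0 i) <= vnorm2 x.
Proof.
rewrite [leRHS](bigID S) /= lerDl.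
by apply: sumr_ge0 => i _; apply: cnorm2_ge0.
Qed.

Lemma qform1 n (x : 'rV[C]_n) : qform 1%:M x = vnorm2 x.
Proof.
rewrite /qform mulmx1 mxE (@raddf_sum _ _ Re); apply: eq_bigr => i _.
by rewrite !mxE.
Qed.

Lemma qformD n (A B : 'M[C]_n) x : qform (A + B) x = qform A x + qform B x.
Proof. by rewrite /qform mulmxDr mulmxDl mxE raddfD. Qed.

Lemma qformN n (A : 'M[C]_n) x : qform (- A) x = - qform A x.
Proof. by rewrite /qform mulmxN mulNmx mxE raddfN. Qed.

Lemma qformZ n (A : 'M[C]_n) g x : qform (g%:C *: A) x = g * qform A x.
Proof.
rewrite /qform -scalemxAr -scalemxAl mxE.
by case: ((x *m A *m x ^t*) 0 0) => p q /=; ring.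
Qed.

Lemma qform_sum n (I : finType) (P : pred I) (F : I -> 'M[C]_n) x :
  qform (\sum_(i | P i) F i) x = \sum_(i | P i) qform (F i) x.
Proof.
elim/big_rec2: _ => [|i y M _ <-]; first by rewrite /qform mulmx0 mul0mx mxE.
by rewrite qformD.
Qed.

Lemma qform_delta n (w : 'I_n) (x : 'rV[C]_n) :
  qform (delta_mx w w) x = cnorm2 (x 0 w).
Proof.
rewrite /qform !mxE (bigD1 w) //= big1 ?addr0 => [|k /negbTE kw]; last first.
  by rewrite !mxE big1 ?mul0r // => l _; rewrite !mxE kw andbF mulr0.
rewrite !mxE (bigD1 w) //= big1 ?addr0 => [|k /negbTE kw].
  by rewrite !mxE !eqxx mulr1.
by rewrite !mxE kw mulr0.
Qed.

Lemma qform_expand n (A : 'M[C]_n) x :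
  qform A x = Re (\sum_k (\sum_l x 0 l * A l k) * (x 0 k)^*).
Proof.
rewrite /qform mxE; congr Re; apply: eq_bigr => k _; rewrite !mxE.
by congr (_ * _); apply: eq_bigr => l _; rewrite mxE.
Qed.

Lemma qform_eigen n (A : 'M[C]_n) (c : R) x :
  x *m A = c%:C *: x -> qform A x = c * vnorm2 x.
Proof.
move=> xA; rewrite -qform1 -qformZ /qform xA.
by rewrite -scalemxAr mulmx1.
Qed.

Lemma qform_row1 n (A : 'M[C]_n) (w : 'I_n) : qform A (row w 1%:M) = Re (A w w).
Proof.
rewrite /qform; have -> : (row w (1%:M : 'M[C]_n)) ^t* = delta_mx w 0.
  by apply/matrixP => i j; rewrite !mxE ord1 eqxx andbT rmorph_nat eq_sym.
by rewrite -row_mul mul1mx -colE !mxE.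
Qed.

End ComplexQuadraticForms.

Section UnitaryDiagonalization.
Variable R : rcfType.
Local Notation C := R[i].
Local Notation "x %:C" := (real_complex R x).
Local Notation Re := (@complex.Re R).

Lemma unitarymx_trCK n (P : 'M[C]_n) : P \is unitarymx -> P ^t* *m P = 1%:M.
Proof. by move=> Pu; rewrite -[P ^t*]mul1mx mulmxKtV. Qed.

Definition unitary_diag n (A P : 'M[C]_n) (d : 'rV[R]_n) :=
  P \is unitarymx /\ A = P ^t* *m diag_mx (map_mx (real_complex R) d) *m P.

Lemma vnorm2_unitary n (P : 'M[C]_n) x :
  P \is unitarymx -> vnorm2 (x *m P ^t*) = vnorm2 x.
Proof.
move=> Pu; rewrite -!qform1 /qform trmx_mul map_mxM trmxCK !mulmx1.
by rewrite -!mulmxA (mulmxA (P ^t*)) unitarymx_trCK // mul1mx.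
Qed.

Lemma vnorm2_row1 n (i : 'I_n) : vnorm2 (row i (1%:M : 'M[C]_n)) = 1.
Proof.
rewrite /vnorm2 (bigD1 i) //= big1 ?addr0 => [|k /negbTE ki].
  by rewrite !mxE eqxx cnorm2_bool.
by rewrite !mxE eq_sym ki cnorm2_bool.
Qed.

Lemma vnorm2_row_unitary n (P : 'M[C]_n) i : P \is unitarymx -> vnorm2 (row i P) = 1.
Proof.
by move=> Pu; rewrite -(vnorm2_unitary _ Pu) -row_mul (unitarymxP Pu) vnorm2_row1.
Qed.

Lemma char_poly_conj n (Q D P : 'M[C]_n) : Q *m P = 1%:M ->
  char_poly (Q *m D *m P) = char_poly D.
Proof.
move=> QP.
have E : char_poly_mx (Q *m D *m P) =
   map_mx polyC Q *m char_poly_mx D *m map_mx polyC P.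
  rewrite /char_poly_mx !map_mxM mulmxBr mulmxBl; congr (_ - _).
  by rewrite mul_mx_scalar -scalemxAl -map_mxM QP map_mx1 scalemx1.
rewrite /char_poly E !det_mulmx mulrAC -det_mulmx -map_mxM QP.
by rewrite map_mx1 det1 mul1r.
Qed.

Section UnitaryDiag.
Variables (n : nat) (A P : 'M[C]_n) (d : 'rV[R]_n).
Hypothesis dA : unitary_diag A P d.

Lemma qform_unitary_diag x : qform A x = \sum_i d 0 i * cnorm2 ((x *m P ^t*) 0 i).
Proof.
case: dA => _ ->; rewrite /qform.
set D := diag_mx _; set z := x *m P ^t*.
have -> : x *m (P ^t* *m D *m P) *m x ^t* = z *m D *m z ^t*.
  by rewrite /z trmx_mul map_mxM trmxCK !mulmxA.
clearbody z; rewrite mxE (@raddf_sum _ _ Re); apply: eq_bigr => i _.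
rewrite !mxE (bigD1 i) //= big1 ?addr0 => [|k /negbTE ki]; last first.
  by rewrite !mxE ki mulr0n mulr0.
by rewrite !mxE eqxx mulr1n /cnorm2; case: (z 0 i) => a b /=; ring.
Qed.

Lemma qform_le_on (M : R) x :
  (forall k, (x *m P ^t*) 0 k != 0 -> d 0 k <= M) -> qform A x <= M * vnorm2 x.
Proof.
move=> dM; rewrite qform_unitary_diag -(vnorm2_unitary _ dA.1) /vnorm2 mulr_sumr.
apply: ler_sum => k _; have [->|/dM dkM] := eqVneq ((x *m P ^t*) 0 k) 0.
  by rewrite cnorm2_0 !mulr0.
by rewrite ler_wpM2r ?cnorm2_ge0.
Qed.

Lemma qform_gt_on (m : R) x : x != 0 ->
  (forall k, (x *m P ^t*) 0 k != 0 -> m < d 0 k) -> m * vnorm2 x < qform A x.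
Proof.
move=> x_neq0 dm; have Pu := dA.1; set z := x *m P ^t*.
have z_neq0 : z != 0.
  by apply: contraNneq x_neq0 => z0; rewrite -(mulmxKtV x Pu) // -/z z0 mul0mx.
have /existsP [k zk_neq0] : [exists k, z 0 k != 0].
  apply: contraNT z_neq0 => /existsPn z0; apply/eqP/rowP => k.
  by rewrite [RHS]mxE; apply/eqP; rewrite -[_ == _]negbK z0.
rewrite qform_unitary_diag -(vnorm2_unitary _ Pu) -subr_gt0 /vnorm2 mulr_sumr -sumrB.
under eq_bigr do rewrite -mulrBl.
have term_ge0 i : 0 <= (d 0 i - m) * cnorm2 (z 0 i).
  have [->|/dm dmi] := eqVneq (z 0 i) 0; first by rewrite cnorm2_0 mulr0.
  by rewrite mulr_ge0 ?cnorm2_ge0 // subr_ge0 ltW.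
rewrite (bigD1 k) //= ltr_pwDl ?sumr_ge0 // mulr_gt0 ?subr_gt0 ?dm //.
by rewrite lt0r cnorm2_eq0 zk_neq0 cnorm2_ge0.
Qed.

Lemma qform_le (M : R) x : (forall i, d 0 i <= M) -> qform A x <= M * vnorm2 x.
Proof. by move=> dM; apply: qform_le_on => k _. Qed.

Lemma qform_ge (m : R) x : (forall i, m <= d 0 i) -> m * vnorm2 x <= qform A x.
Proof.
move=> dm; rewrite qform_unitary_diag -(vnorm2_unitary _ dA.1) /vnorm2 mulr_sumr.
by apply: ler_sum => i _; rewrite ler_wpM2r ?cnorm2_ge0.
Qed.

Lemma norm_qform_le x : `|qform A x| <= (\sum_i `|d 0 i|) * vnorm2 x.
Proof.
rewrite qform_unitary_diag -(vnorm2_unitary _ dA.1).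
apply: le_trans (ler_norm_sum _ _ _) _; rewrite mulr_suml.
apply: ler_sum => i _; rewrite normrM (ger0_norm (cnorm2_ge0 _)) ler_wpM2l //.
by have := sum_cnorm2_le_vnorm2 (pred1 i) (x *m P ^t*); rewrite big_pred1_eq.
Qed.

Lemma qform_row i : qform A (row i P) = d 0 i.
Proof.
rewrite qform_unitary_diag -row_mul (unitarymxP dA.1) (bigD1 i) //=.
rewrite big1 ?addr0 => [|k /negbTE ki]; first by rewrite !mxE eqxx cnorm2_bool mulr1.
by rewrite !mxE eq_sym ki cnorm2_bool mulr0.
Qed.

Lemma row_eigen i : row i P *m A = (d 0 i)%:C *: row i P.
Proof.
case: dA => Pu ->; rewrite !mulmxA -row_mul (unitarymxP Pu) -row_mul mul1mx.
by rewrite row_diag_mx -scalemxAl -rowE mxE.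
Qed.

Lemma qform_max_eigenvector (M : R) x : (forall i, d 0 i <= M) ->
  qform A x = M * vnorm2 x -> x *m A = M%:C *: x.
Proof.
move=> dM qx; have Pu := dA.1; set z := x *m P ^t*.
have gap_ge0 i : true -> 0 <= (M - d 0 i) * cnorm2 (z 0 i).
  by move=> _; rewrite mulr_ge0 ?cnorm2_ge0 // subr_ge0.
have gap_sum : \sum_i (M - d 0 i) * cnorm2 (z 0 i) = 0.
  under eq_bigr do rewrite mulrBl.
  rewrite sumrB -mulr_sumr -/(vnorm2 z) /z (vnorm2_unitary _ Pu).
  by rewrite -qform_unitary_diag qx subrr.
have xE : x = z *m P by rewrite /z mulmxKtV.
clearbody z.
have zD : z *m diag_mx (map_mx (real_complex R) d) = M%:C *: z.
  apply/rowP => i; rewrite mul_mx_diag !mxE.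
  have /eqP := psumr_eq0P gap_ge0 gap_sum (i := i) isT.
  rewrite mulf_eq0 subr_eq0 cnorm2_eq0 => /orP [/eqP <- | /eqP ->].
    by rewrite mulrC.
  by rewrite !mul0r mulr0.
by case: dA => _ ->; rewrite xE !mulmxA mulmxtVK // zD -scalemxAl.
Qed.

End UnitaryDiag.

Lemma char_poly_unitary_diag n (M : 'M[R]_n) P d :
  unitary_diag (map_mx (real_complex R) M) P d ->
  char_poly M = \prod_(i < n) ('X - (d 0 i)%:P).
Proof.
move=> [Pu E]; apply: (@map_poly_inj _ _ (real_complex R)).
rewrite map_char_poly E char_poly_conj ?unitarymx_trCK //.
rewrite char_poly_trig ?diag_mx_is_trig // rmorph_prod.
by apply: eq_bigr => i _; rewrite !mxE eqxx mulr1n rmorphB /= map_polyX map_polyC.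
Qed.

Lemma unitary_diag_affine n (A P : 'M[C]_n) d (g : R) : unitary_diag A P d ->
  unitary_diag (- (g%:C *: A) - 1%:M) P (\row_i (- (g * d 0 i) - 1)).
Proof.
case=> Pu EA; split=> //.
have -> : diag_mx (map_mx (real_complex R) (\row_i (- (g * d 0 i) - 1))) =
    - (g%:C *: diag_mx (map_mx (real_complex R) d)) - 1%:M.
  apply/matrixP => i k; rewrite !mxE; case: eqP => _ /=.
    by rewrite !mulr1n rmorphB rmorphN rmorphM rmorph1.
  by rewrite !mulr0n mulr0 oppr0 addr0.
rewrite mulmxBr mulmxBl mulmxN mulNmx -scalemxAr -scalemxAl mulmx1.
by rewrite unitarymx_trCK // EA.
Qed.

End UnitaryDiagonalization.

Section RealSymmetricSpectral.
Variable R : rcfType.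
Local Notation C := R[i].
Local Notation toCmx := (map_mx (real_complex R)).

Definition sym_eigvecs n (M : 'M[R]_n) : 'M[C]_n := spectralmx (toCmx M).
Definition sym_eigvals n (M : 'M[R]_n) : 'rV[R]_n :=
  map_mx (@complex.Re R) (spectral_diag (toCmx M)).

Lemma sym_unitary_diag n (M : 'M[R]_n) : M^T = M ->
  unitary_diag (toCmx M) (sym_eigvecs M) (sym_eigvals M).
Proof.
move=> Msym; have Mherm : toCmx M \is hermsymmx.
  apply: realsym_hermsym; last first.
    by apply/mxOverP => i j; rewrite mxE; apply/complex_realP; eexists.
  by apply/is_hermitianmxP; rewrite expr0 scale1r map_mx_id // map_trmx Msym.
have Pu := spectral_unitarymx (toCmx M).
have /orthomx_spectralP ME := hermitian_normalmx Mherm.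
split => //; rewrite {1}ME invmx_unitary //; congr (_ *m diag_mx _ *m _).
apply/matrixP => i j; rewrite !mxE.
by have /mxOverP /(_ i j) /RRe_real := hermitian_spectral_diag_real Mherm.
Qed.

End RealSymmetricSpectral.

Lemma count_le_nth_gt (R : realDomainType) (s : seq R) k :
  sorted <=%R s -> (k < size s)%N -> (k < count (fun x => (x <= s`_k)%R) s)%N.
Proof.
move=> s_sorted ks; set t := s`_k; rewrite -(cat_take_drop k.+1 s) count_cat.
apply: leq_trans (leq_addr _ _).
have take_le : all (fun x => (x <= t)%R) (take k.+1 s).
  apply/(all_nthP 0) => i; rewrite size_takel // => hi.
  rewrite nth_take //; apply: (sorted_leq_nth le_trans lexx) => //.
  by rewrite inE (leq_trans hi ks).
by move: take_le; rewrite all_count => /eqP ->; rewrite size_takel.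
Qed.

Section SortedEntries.
Variable R : realDomainType.

Definition sorted_entries n (d : 'rV[R]_n) : seq R :=
  sort <=%R [seq d 0 i | i <- enum 'I_n].

Variables (n : nat) (d : 'rV[R]_n).

Lemma size_sorted_entries : size (sorted_entries d) = n.
Proof. by rewrite size_sort size_map size_enum_ord. Qed.

Lemma sorted_entries_sorted : sorted <=%R (sorted_entries d).
Proof. by apply: sort_sorted; exact: le_total. Qed.

Lemma big_sorted_entries (S : comPzSemiRingType) (F : R -> S) :
  \prod_(x <- sorted_entries d) F x = \prod_(i < n) F (d 0 i).
Proof. by rewrite (perm_big _ (permEl (perm_sort _ _))) big_map big_enum. Qed.

Lemma count_sorted_entries (p : pred R) :
  count p (sorted_entries d) = #|[set i | p (d 0 i)]|.
Proof.
rewrite (permP (permEl (perm_sort _ _))) count_map cardsE cardE /enum_mem.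
by rewrite size_filter (@eq_filter _ _ predT) ?filter_predT.
Qed.

Lemma nth_sorted_entries k : (k < n)%N -> exists i, (sorted_entries d)`_k = d 0 i.
Proof.
move=> kn; have : (sorted_entries d)`_k \in sorted_entries d.
  by rewrite mem_nth ?size_sorted_entries.
by rewrite mem_sort => /mapP [i _ ->]; exists i.
Qed.

Lemma sorted_entries0_le i : (sorted_entries d)`_0 <= d 0 i.
Proof.
have /(nthP 0) [m hm <-] : d 0 i \in sorted_entries d.
  by rewrite mem_sort map_f // mem_enum.
apply: (sorted_leq_nth le_trans lexx) => //; first exact: sorted_entries_sorted.
by rewrite inE (leq_ltn_trans _ hm).
Qed.

Lemma sorted_entries1_ge (m : R) : (1 < n)%N ->
  (#|[set i | (d 0 i < m)%R]| <= 1)%N -> m <= (sorted_entries d)`_1.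
Proof.
move=> n_gt1 few; rewrite leNgt; apply/negP => s1_lt.
have := @count_le_nth_gt _ _ 1 sorted_entries_sorted.
rewrite size_sorted_entries count_sorted_entries => /(_ n_gt1); apply/negP.
rewrite -leqNgt; apply: leq_trans few; apply: subset_leq_card.
by apply/subsetP => i; rewrite !inE => /le_lt_trans; apply.
Qed.

End SortedEntries.

Section CourantFischer.
Variable R : rcfType.
Local Notation C := R[i].

Lemma rowsub_unitary_coord n m (P : 'M[C]_n) (f : 'I_m -> 'I_n) (x : 'rV[C]_n) k :
  P \is unitarymx -> (x <= rowsub f P)%MS -> (x *m P ^t*) 0 k != 0 -> k \in codom f.
Proof.
move=> Pu /submxP [y ->]; apply: contraNT => k_notin_f.
rewrite -mulmxA mxE big1 // => i _.
have -> : (rowsub f P *m P ^t*) i k = (P *m P ^t*) (f i) k.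
  by rewrite !mxE; apply: eq_bigr => l _; rewrite !mxE.
rewrite (unitarymxP Pu) mxE; case: eqP => [fik | _]; last by rewrite mulr0.
by move: k_notin_f; rewrite -fik codom_f.
Qed.

Lemma rank_rowsub_unitary n m (P : 'M[C]_n) (f : 'I_m -> 'I_n) :
  P \is unitarymx -> injective f -> \rank (rowsub f P) = m.
Proof.
move=> /row_unitarymxP Pr finj; apply: mxrank_unitary; apply/row_unitarymxP => i j.
by rewrite !row_rowsub Pr (inj_eq finj).
Qed.

Lemma unitary_coords_common_support n (P Q : 'M[C]_n) (S T : {set 'I_n}) :
  P \is unitarymx -> Q \is unitarymx -> (n < #|S| + #|T|)%N ->
  exists2 x : 'rV[C]_n, x != 0 &
    (forall k, (x *m P ^t*) 0 k != 0 -> k \in S) /\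
    (forall k, (x *m Q ^t*) 0 k != 0 -> k \in T).
Proof.
move=> Pu Qu card_gt.
pose U := rowsub (@enum_val _ (mem S)) P.
pose V := rowsub (@enum_val _ (mem T)) Q.
have rU : \rank U = #|S| by apply: rank_rowsub_unitary => //; exact: enum_val_inj.
have rV : \rank V = #|T| by apply: rank_rowsub_unitary => //; exact: enum_val_inj.
have UV_neq0 : (U :&: V)%MS != 0.
  rewrite -mxrank_eq0; have := mxrank_sum_cap U V; have := rank_leq_col (U + V)%MS.
  by move: rU rV card_gt; lia.
exists (nz_row (U :&: V)%MS); first by rewrite nz_row_eq0.
have := nz_row_sub (U :&: V)%MS; rewrite sub_capmx => /andP [xU xV].
split=> k.
  by move=> /(rowsub_unitary_coord Pu xU) /codomP [i ->]; apply: enum_valP.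
by move=> /(rowsub_unitary_coord Qu xV) /codomP [i ->]; apply: enum_valP.
Qed.

Section Weyl.
Variables (n : nat) (A B PA PB : 'M[C]_n) (a b : 'rV[R]_n) (c : R).
Hypotheses (dA : unitary_diag A PA a) (dB : unitary_diag B PB b).
Hypothesis qAB : forall x, qform A x - c * vnorm2 x <= qform B x.

(* A nonzero vector in the span both of the eigenvectors of B with eigenvalue
   at most t and of those of A with eigenvalue above t + c would violate qAB. *)
Lemma weyl_count t :
  (#|[set i | (b 0 i <= t)%R]| <= #|[set i | (a 0 i <= t + c)%R]|)%N.
Proof.
rewrite leqNgt; apply/negP => card_lt.
set Sa := [set i | _] in card_lt; set Sb := [set i | _] in card_lt.
have [|x x_neq0 [xB xA]] :=
  unitary_coords_common_support (S := Sb) (T := ~: Sa) dB.1 dA.1.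
  by rewrite -[n in (n < _)%N]card_ord -(cardsC Sa) ltn_add2r.
have qB : qform B x <= t * vnorm2 x.
  by apply: (qform_le_on dB) => k /xB; rewrite inE.
have qA : (t + c) * vnorm2 x < qform A x.
  by apply: (qform_gt_on dA) => // k /xA; rewrite !inE -ltNge.
by have := qAB x; rewrite mulrDl in qA; lra.
Qed.

Lemma weyl_sorted_entries k : (k < n)%N ->
  (sorted_entries a)`_k <= (sorted_entries b)`_k + c.
Proof.
move=> kn; apply: nth_count_le; first exact: sorted_entries_sorted.
rewrite count_sorted_entries; apply: leq_trans (weyl_count _).
have := @count_le_nth_gt _ _ k (sorted_entries_sorted b).
by rewrite size_sorted_entries count_sorted_entries => /(_ kn).
Qed.

End Weyl.
End CourantFischer.

Section PerronFrobenius.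
Variable R : rcfType.
Local Notation C := R[i].
Local Notation "x %:C" := (real_complex R x).
Local Notation Re := (@complex.Re R).
Local Notation toCmx := (map_mx (real_complex R)).

Lemma Re_le_norm (z : C) : (Re z)%:C <= `|z|.
Proof. by apply: le_trans (normc_ge_Re z); rewrite lecR ler_norm. Qed.

Lemma qform_le_norm n (A : 'M[R]_n) (v : 'rV[C]_n) : (forall l k, 0 <= A l k) ->
  qform (toCmx A) v <= qform (toCmx A) (map_mx Num.norm v).
Proof.
move=> A_ge0; rewrite !qform_expand; set Sv := \sum_k _; set Sa := \sum_k _.
suff : (Re Sv)%:C <= Sa by rewrite lecE /= => /andP [_].
apply: le_trans (Re_le_norm _) _; apply: le_trans (ler_norm_sum _ _ _) _.
apply: ler_sum => k _; rewrite !mulr_suml.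
apply: le_trans (ler_norm_sum _ _ _) _; apply: ler_sum => l _.
rewrite !mxE !normrM norm_conjC (geC0_conj (normr_ge0 _)).
by rewrite (@ger0_norm _ (A l k)%:C) // lecR.
Qed.

Section ConnectedGraph.
Variables (n : nat) (adj : rel 'I_n).
Hypotheses (adj_sym : symmetric adj) (adj_connected : forall x y, connect adj x y).
Local Notation A := (toCmx (adjmx R adj)).
Variables (P : 'M[C]_n) (e : 'rV[R]_n) (phi : R).
Hypotheses (dA : unitary_diag A P e) (e_le : forall i, e 0 i <= phi).

Lemma norm_top_eigenvector (v : 'rV[C]_n) : v *m A = phi%:C *: v ->
  map_mx Num.norm v *m A = phi%:C *: map_mx Num.norm v.
Proof.
move=> vA; apply: (qform_max_eigenvector dA e_le); apply/eqP; rewrite eq_le.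
rewrite (qform_le dA) //= vnorm2_norm -(qform_eigen vA).
by apply: qform_le_norm => l k; rewrite mxE ler0n.
Qed.

(* Since |v| is again a top eigenvector, (|v| A)_k = 0 at a zero k of v forces
   |v| to vanish on the neighbours of k; connectivity spreads the zero. *)
Lemma top_eigenvector_nonvanishing (v : 'rV[C]_n) :
  v *m A = phi%:C *: v -> v != 0 -> forall k, v 0 k != 0.
Proof.
move=> vA v_neq0; have aA := norm_top_eigenvector vA.
have zero_closed : closed adj [pred k | v 0 k == 0].
  suff zero_back l k : adj l k -> v 0 k = 0 -> v 0 l = 0.
    move=> x y xy; rewrite !inE; apply/eqP/eqP; apply: zero_back => //.
    by rewrite adj_sym.
  move=> lk vk0; have /rowP /(_ k) := aA; rewrite !mxE vk0 normr0 mulr0.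
  have terms_ge0 m : true -> 0 <= map_mx Num.norm v 0 m * A m k.
    by move=> _; rewrite !mxE rmorph_nat mulr_ge0 ?normr_ge0 ?ler0n.
  move=> /(psumr_eq0P terms_ge0) /(_ l isT).
  by rewrite !mxE rmorph_nat lk mulr1 => /normr0_eq0.
move=> k; apply: contra v_neq0 => vk0; apply/eqP/rowP => l; rewrite [RHS]mxE.
have := closed_connect zero_closed (adj_connected k l).
by rewrite !inE vk0 => /esym/eqP.
Qed.

(* For two orthonormal top eigenvectors u and w, the top eigenvector
   w_i u - u_i w vanishes at i, hence is zero, contradicting independence. *)
Lemma top_eigenvalue_simple : (#|[set i | (e 0 i == phi)%R]| <= 1)%N.
Proof.
rewrite leqNgt; apply/negP => /card_gt1P [i [k [+ + ik]]].
rewrite !inE => /eqP ei /eqP ek.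
have Pu := dA.1; set u := row i P; set w := row k P.
have uA : u *m A = phi%:C *: u by rewrite (row_eigen dA) ei.
have wA : w *m A = phi%:C *: w by rewrite (row_eigen dA) ek.
have u_neq0 : u != 0.
  apply/eqP => u0; have := vnorm2_row_unitary i Pu; rewrite -/u u0 /vnorm2 big1.
    by move/eqP; rewrite eq_sym oner_eq0.
  by move=> l _; rewrite mxE cnorm2_0.
have ui := top_eigenvector_nonvanishing uA u_neq0 i.
set v := w 0 i *: u - u 0 i *: w.
have vA : v *m A = phi%:C *: v.
  rewrite mulmxBl -!scalemxAl uA wA !scalerA scalerBr !scalerA.
  by rewrite (mulrC (w 0 i)) (mulrC (u 0 i)).
have v0 : v = 0.
  apply/eqP; apply: contraT => v_neq0.
  by have := top_eigenvector_nonvanishing vA v_neq0 i; rewrite !mxE mulrC subrr eqxx.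
have : (v *m P ^t*) 0 k = 0 by rewrite v0 mul0mx mxE.
rewrite mulmxBl -!scalemxAl -!row_mul (unitarymxP Pu) !mxE eqxx (negbTE ik).
rewrite mulr0 sub0r mulr1 => /eqP; rewrite oppr_eq0.
by move: ui; rewrite mxE => /negbTE ->.
Qed.

End ConnectedGraph.
End PerronFrobenius.

Section LipschitzIVT.
Import classical_sets topology normedtype numFieldNormedType.Exports.
Variable R : realType.

Lemma lipschitz_continuous (f : R -> R) (L : R) : 0 <= L ->
  (forall x y, `|f x - f y| <= L * `|x - y|) -> continuous f.
Proof.
move=> L_ge0 f_lip x; apply/cvgrPdist_lt => e e_gt0.
have e' : 0 < e / (L + 1) by rewrite divr_gt0 //; lra.
near=> y; apply: le_lt_trans (f_lip x y) _.
have : `|x - y| < e / (L + 1) by near: y; apply: cvgr_dist_lt => //; exact: cvg_id.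
by rewrite ltr_pdivlMr; [have := normr_ge0 (x - y); nra | lra].
Unshelve. all: by end_near.
Qed.

Lemma lipschitz_IVT (f : R -> R) (L a b : R) : 0 <= L ->
  (forall x y, `|f x - f y| <= L * `|x - y|) -> a <= b -> f a <= 0 -> 0 <= f b ->
  exists2 c, a <= c <= b & f c = 0.
Proof.
move=> L_ge0 f_lip ab fa fb.
have := IVT (v := 0) ab (continuous_subspaceT (lipschitz_continuous L_ge0 f_lip)).
by rewrite ge_min fa le_max fb orbT => /(_ isT) [c]; rewrite in_itv /=; exists c.
Qed.

End LipschitzIVT.

Section SymmetricSpectrum.
Variable R : realType.

Lemma sym_sorted_spectrum n (M : 'M[R]_n) : M^T = M ->
  sorted_spectrum M (sorted_entries (sym_eigvals M)).
Proof.
move=> Msym; split; first exact: sorted_entries_sorted.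
by rewrite (char_poly_unitary_diag (sym_unitary_diag Msym)) big_sorted_entries.
Qed.

Lemma sym_eigvals_le_largest n (M : 'M[R]_n) phi : M^T = M ->
  largest_eigenvalue M phi -> forall i, sym_eigvals M 0 i <= phi.
Proof.
move=> Msym [_ top] i; apply: top.
rewrite eigenvalue_root_char (char_poly_unitary_diag (sym_unitary_diag Msym)).
rewrite -(big_sorted_entries _ (fun x => 'X - x%:P)) root_prod_XsubC.
by rewrite mem_sort map_f ?mem_enum.
Qed.

End SymmetricSpectrum.

Section MarkedVertices.
Variable R : realType.
Local Notation C := R[i].
Local Notation "x %:C" := (real_complex R x).
Local Notation toCmx := (map_mx (real_complex R)).

Variables (N : nat) (adj : rel 'I_N) (W : {set 'I_N}) (phi0 : R).
Hypotheses (adj_sym : symmetric adj) (adj_irr : irreflexive adj).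
Hypothesis adj_connected : forall x y, connect adj x y.
Hypothesis phi0_top : largest_eigenvalue (adjmx R adj) phi0.
Hypothesis W_neq0 : W != set0.

Local Notation A := (adjmx R adj).
Local Notation H g := (Hmx adj W (g : R)).

Lemma adjmx_sym : A^T = A.
Proof. by apply/matrixP => i k; rewrite !mxE adj_sym. Qed.

Lemma Hmx_sym g : (H g)^T = H g.
Proof.
rewrite /Hmx linearD linearN linearZ /= adjmx_sym linearN linear_sum /=.
by congr (_ - _); apply: eq_bigr => w _; rewrite trmx_delta.
Qed.

Local Notation eigA := (sym_eigvals A).
Local Notation dA := (sym_unitary_diag adjmx_sym).
Local Notation dH g := (sym_unitary_diag (Hmx_sym g)).

Definition lam g k := (sorted_entries (sym_eigvals (H g)))`_k.

Lemma eigA_le i : eigA 0 i <= phi0.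
Proof. exact: sym_eigvals_le_largest adjmx_sym phi0_top i. Qed.

Lemma qform_Hmx g x : qform (toCmx (H g)) x =
  - (g * qform (toCmx A) x) - \sum_(w in W) cnorm2 (x 0 w).
Proof.
have -> : toCmx (H g) = - (g%:C *: toCmx A) - \sum_(w in W) delta_mx w w.
  apply/matrixP => i k; rewrite !mxE !summxE rmorphB rmorphN rmorphM rmorph_sum /=.
  by congr (- _ - _); apply: eq_bigr => w _; rewrite !mxE rmorph_nat.
rewrite qformD qformN qformZ qformN qform_sum; congr (_ - _).
by apply: eq_bigr => w _; rewrite qform_delta.
Qed.

Definition trace_normA := \sum_i `|eigA 0 i|.

Lemma trace_normA_ge0 : 0 <= trace_normA.
Proof. by apply: sumr_ge0 => i _; exact: normr_ge0. Qed.

Lemma lam_le_lam g g' k : (k < N)%N ->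
  lam g k <= lam g' k + `|g' - g| * trace_normA.
Proof.
move=> kN; apply: (weyl_sorted_entries (dH g) (dH g')) => // x.
rewrite !qform_Hmx.
have := norm_qform_le dA x; rewrite -/trace_normA.
set q := qform _ x; set s := \sum_(w in W) _ => q_le.
have : (g' - g) * q <= `|g' - g| * trace_normA * vnorm2 x.
  by apply: le_trans (ler_norm _) _; rewrite normrM -mulrA ler_wpM2l.
by rewrite mulrBl; lra.
Qed.

Lemma lam_lipschitz k g g' : (k < N)%N ->
  `|lam g k - lam g' k| <= trace_normA * `|g - g'|.
Proof.
move=> kN; have := lam_le_lam g g' kN; have := lam_le_lam g' g kN.
by rewrite [`|g' - g|]distrC ler_norml mulrC; lra.
Qed.

Lemma lam0_le_m1 g : (0 < N)%N -> lam g 0 <= -1.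
Proof.
move=> N_gt0; have [w wW] := set0Pn _ W_neq0; set x := row w (1%:M : 'M[C]_N).
have qx : qform (toCmx (H g)) x = -1.
  rewrite qform_Hmx qform_row1 !mxE adj_irr mulr0 oppr0 sub0r (bigD1 w) //=.
  rewrite big1 => [|k /andP [_ kw]]; first by rewrite !mxE eqxx cnorm2_bool addr0.
  by rewrite !mxE eq_sym (negbTE kw) cnorm2_0.
have := qform_ge (dH g) x (sorted_entries0_le (sym_eigvals (H g))).
by rewrite qx vnorm2_row1 mulr1.
Qed.

Lemma lam_le_trace_norm g k : 0 <= g -> (k < N)%N -> lam g k <= g * trace_normA.
Proof.
move=> g_ge0 kN; rewrite /lam; have [i ->] := nth_sorted_entries (sym_eigvals (H g)) kN.
set x := row i (sym_eigvecs (H g)).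
rewrite -(qform_row (dH g)) qform_Hmx -/x.
have := norm_qform_le dA x; rewrite (vnorm2_row_unitary _ (dH g).1) mulr1 => q_le.
have : 0 <= \sum_(w in W) cnorm2 (x 0 w) by apply: sumr_ge0 => w _; apply: cnorm2_ge0.
have : - (g * qform (toCmx A) x) <= g * trace_normA.
  by rewrite -mulrN ler_wpM2l // (le_trans _ q_le) // -normrN ler_norm.
lra.
Qed.

(* The eigenvalues of - g A - 1, whose quadratic form lies below that of H g. *)
Definition shifted_eigvals g : 'rV[R]_N := \row_i (- (g * eigA 0 i) - 1).

Lemma shifted_le_lam g k : (k < N)%N ->
  (sorted_entries (shifted_eigvals g))`_k <= lam g k.
Proof.
move=> kN; rewrite -[lam g k]addr0.
apply: (weyl_sorted_entries (unitary_diag_affine g dA) (dH g)) => // x.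
rewrite mul0r subr0 qformD qformN qformZ qformN qform1 qform_Hmx.
by have := sum_cnorm2_le_vnorm2 [in W] x; lra.
Qed.

Lemma lam0_ge g : 0 <= g -> (0 < N)%N -> - (g * phi0) - 1 <= lam g 0.
Proof.
move=> g_ge0 N_gt0; apply: le_trans (shifted_le_lam g N_gt0).
have [i ->] := nth_sorted_entries (shifted_eigvals g) N_gt0.
by rewrite mxE lerB // lerN2 ler_wpM2l // eigA_le.
Qed.

Definition phi1 := \big[Order.max/(phi0 - 1)]_(i | eigA 0 i != phi0) eigA 0 i.

Lemma phi1_lt : phi1 < phi0.
Proof. by apply: bigmax_lt => [|i ne]; [lra | rewrite lt_neqAle ne eigA_le]. Qed.

Lemma le_phi1 i : eigA 0 i != phi0 -> eigA 0 i <= phi1.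
Proof. by move=> ne; apply: le_bigmax_cond. Qed.

Lemma lam1_ge g : 0 <= g -> (1 < N)%N -> - (g * phi1) - 1 <= lam g 1.
Proof.
move=> g_ge0 N_gt1; apply: le_trans (shifted_le_lam g N_gt1).
apply: sorted_entries1_ge => //.
apply: leq_trans (top_eigenvalue_simple adj_sym adj_connected dA eigA_le).
apply/subset_leq_card/subsetP => i; rewrite !inE mxE; apply: contraLR => ne.
by rewrite -leNgt lerB // lerN2 ler_wpM2l // le_phi1.
Qed.

Variable j : nat.
Hypothesis j_range : (2 <= j <= N)%N.

Definition mid_offset g := (lam g 0 + lam g j.-1) / 2 + g * phi0.

Lemma mid_offset_lipschitz g g' :
  `|mid_offset g - mid_offset g'| <= (trace_normA + `|phi0|) * `|g - g'|.
Proof.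
have N_gt0 : (0 < N)%N by lia.
have jN : (j.-1 < N)%N by lia.
have := lam_lipschitz g g' N_gt0; have := lam_lipschitz g g' jN.
rewrite /mid_offset !ler_norml => /andP [lj1 lj2] /andP [l01 l02].
have : `|(g - g') * phi0| <= `|phi0| * `|g - g'| by rewrite normrM mulrC.
rewrite ler_norml mulrBl => /andP [p1 p2].
have := normr_ge0 (g - g'); rewrite mulrDl.
set d := `|g - g'| in lj1 lj2 l01 l02 p1 p2 * => d_ge0.
by apply/andP; split; lra.
Qed.

Lemma mid_offset_le0 g : 0 <= g -> g * (trace_normA + 2 * `|phi0|) <= 1 ->
  mid_offset g <= 0.
Proof.
have N_gt0 : (0 < N)%N by lia.
have jN : (j.-1 < N)%N by lia.
move=> g_ge0 g_small; have := lam0_le_m1 g N_gt0; have := lam_le_trace_norm g_ge0 jN.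
have : g * phi0 <= g * `|phi0| by rewrite ler_wpM2l ?ler_norm.
rewrite /mid_offset; lra.
Qed.

Lemma mid_offset_ge0 g : 2 / (phi0 - phi1) <= g -> 0 <= mid_offset g.
Proof.
have N_gt0 : (0 < N)%N by lia.
have N_gt1 : (1 < N)%N by lia.
have jN : (j.-1 < N)%N by lia.
have j_gt1 : (1 <= j.-1)%N by lia.
move=> g_large; have gap_gt0 : 0 < phi0 - phi1 by have := phi1_lt; lra.
have g_ge0 : 0 <= g by apply: le_trans g_large; rewrite divr_ge0 // ltW.
have : 2 <= g * (phi0 - phi1) by rewrite -ler_pdivrMr.
have := lam0_ge g_ge0 N_gt0; have := lam1_ge g_ge0 N_gt1.
have : lam g 1 <= lam g j.-1.
  apply: (sorted_leq_nth le_trans lexx); rewrite ?inE ?size_sorted_entries //.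
  exact: sorted_entries_sorted.
rewrite /mid_offset; lra.
Qed.

Lemma mid_offset_root : exists2 g, 0 < g & mid_offset g = 0.
Proof.
set g1 := (trace_normA + 2 * `|phi0| + 1)^-1.
have K_gt0 : 0 < trace_normA + 2 * `|phi0| + 1.
  by have := trace_normA_ge0; have := normr_ge0 phi0; lra.
have g1_gt0 : 0 < g1 by rewrite invr_gt0.
have g1_small : g1 * (trace_normA + 2 * `|phi0|) <= 1.
  by rewrite -[leRHS](mulVf (lt0r_neq0 K_gt0)) ler_wpM2l ?ltW //; lra.
have gap_gt0 : 0 < phi0 - phi1 by have := phi1_lt; lra.
set g2 := g1 + 2 / (phi0 - phi1).
have L_ge0 : 0 <= trace_normA + `|phi0|.
  by have := trace_normA_ge0; have := normr_ge0 phi0; lra.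
have g1_le_g2 : g1 <= g2 by rewrite lerDl divr_ge0 // ltW.
have g2_large : 2 / (phi0 - phi1) <= g2 by rewrite lerDr ltW.
have [c /andP [g1_le_c _] root_c] := lipschitz_IVT L_ge0 mid_offset_lipschitz
  g1_le_g2 (mid_offset_le0 (ltW g1_gt0) g1_small) (mid_offset_ge0 g2_large).
by exists c => //; apply: lt_le_trans g1_le_c.
Qed.

End MarkedVertices.

Unset Implicit Arguments.

Theorem proposition4 (R : realType) (N : nat) (adj : rel 'I_N)
  (W : {set 'I_N}) (phi0 : R) (j : nat) :
  (2 <= N)%N ->
  simple_graph adj ->
  connected_graph adj ->
  largest_eigenvalue (adjmx R adj) phi0 ->
  W != set0 ->
  (2 <= j <= N)%N ->
  exists g : R, 0 < g /\
    exists s : seq R, sorted_spectrum (Hmx adj W g) s /\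
      - (g * phi0) = (s`_0 + s`_j.-1) / 2.
Proof.
move=> _ [adj_sym adj_irr] adj_connected phi0_top W_neq0 j_range.
have [g g_gt0 root_g] :=
  mid_offset_root adj_sym adj_irr adj_connected phi0_top W_neq0 j_range.
exists g; split => //; exists (sorted_entries (sym_eigvals (Hmx adj W g))).
split; first exact/sym_sorted_spectrum/Hmx_sym.
by move: root_g; rewrite /mid_offset /lam; lra.
Qed.
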